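(* Let $\Gamma$ be a countable discrete group and $\mu$ a probability measure on $\Gamma$ whose support generates $\Gamma$ as a semigroup. If $\lambda\in\mathbb T$ is a peripheral eigenvalue of $\mathcal P_\mu$, i.e. there is $0\neq T\in\mathcal B(\ell^2(\Gamma))$ with $\mathcal P_\mu(T)=\lambda T$, then $\lambda^k=1$ for some positive integer $k$.
   Context: $\rho$ denotes the right regular representation of $\Gamma$ on $\ell^2(\Gamma)$, $\rho_g\delta_x=\delta_{xg^{-1}}$. The Markov operator $\mathcal P_\mu:\mathcal B(\ell^2(\Gamma))\to\mathcal B(\ell^2(\Gamma))$ is $\mathcal P_\mu(T)=\sum_{g\in\Gamma}\mu(g)\rho_gT\rho_g^*$. *)

From Stdlib Require Import Reals List.
From Coquelicot Require Import Coquelicot.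
Open Scope R_scope.

Definition is_group {G : Type} (mul : G -> G -> G) (inv : G -> G) (e : G) : Prop :=
  (forall a b c, mul a (mul b c) = mul (mul a b) c) /\
  (forall a, mul e a = a /\ mul a e = a) /\
  (forall a, mul (inv a) a = e /\ mul a (inv a) = e).

Definition countable_type (G : Type) : Prop :=
  exists enum : nat -> G, forall g, exists n, enum n = g.

(* Unconditional (net) sum of a family indexed by an arbitrary type:
   has_usum f s  <->  the finite partial sums over finite sets F
   converge to s along the directed set of finite subsets. *)
Definition fin_sum {G : Type} (f : G -> C) (F : list G) : C :=
  fold_right Cplus (RtoC 0) (map f F).

Definition has_usum {G : Type} (f : G -> C) (s : C) : Prop :=
  forall eps : R, 0 < eps ->
    exists F0 : list G, forall F : list G, NoDup F -> incl F0 F ->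
      Cmod (Cminus (fin_sum f F) s) < eps.

Definition prob_measure {G : Type} (mu : G -> R) : Prop :=
  (forall g, 0 <= mu g) /\ has_usum (fun g => RtoC (mu g)) (RtoC 1).

Inductive gen_semigroup {G : Type} (mul : G -> G -> G) (mu : G -> R) : G -> Prop :=
  | gs_supp : forall g, 0 < mu g -> gen_semigroup mul mu g
  | gs_mul : forall a b, gen_semigroup mul mu a -> gen_semigroup mul mu b ->
             gen_semigroup mul mu (mul a b).

(* Bounded operators on l^2(G), represented by their matrix coefficients
   T x y = <T delta_y, delta_x>.  A matrix defines an element of B(l^2(G))
   iff the associated sesquilinear form is bounded on finitely supported
   vectors: |sum_{x,y in F} conj(eta x) T x y xi y| <= M ||xi|| ||eta||. *)
Definition l2norm_fin {G : Type} (xi : G -> C) (F : list G) : R :=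
  sqrt (fold_right Rplus 0 (map (fun x => (Cmod (xi x))^2) F)).

Definition bounded_op {G : Type} (T : G -> G -> C) : Prop :=
  exists M : R, forall (F : list G) (xi eta : G -> C), NoDup F ->
    Cmod (fin_sum (fun x => fin_sum (fun y => Cmult (Cconj (eta x)) (Cmult (T x y) (xi y))) F) F)
    <= M * l2norm_fin xi F * l2norm_fin eta F.

(* Matrix coefficients of rho_g T rho_g^* with rho_g delta_x = delta_{x g^-1}:
   <rho_g T rho_g^* delta_y, delta_x> = T (x g) (y g).  Hence
   P_mu(T) = lambda T  reads, coefficientwise (the defining series converges
   sigma-weakly, so coefficients are the absolutely convergent sums): *)
Definition markov_eig {G : Type} (mul : G -> G -> G) (mu : G -> R)
  (T : G -> G -> C) (lam : C) : Prop :=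
  forall x y, has_usum (fun g => Cmult (RtoC (mu g)) (T (mul x g) (mul y g)))
                       (Cmult lam (T x y)).

(* Let S be the supremum of the matrix coefficients |T x y| of the
   eigenoperator, which is finite (T is bounded) and positive (T <> 0).
   Isolating one term of the series P_mu(T) = lam T gives, for every g,
     |lam T x y - mu g T (x g) (y g)| <= (1 - mu g) S,
   and iterating along a word g_1 ... g_n gives
     |lam^n T x y - a T (x g_1...g_n) (y g_1...g_n)| <= (1 - a) S,
   with a = mu g_1 ... mu g_n.  Since the support of mu generates the group
   as a semigroup, the unit e is such a product with a > 0; then
   |lam^n - a| |T x y| <= (1 - a) S for all x, y, so |lam^n - a| <= 1 - a.
   But on the unit circle only the point 1 lies within distance 1 - a of a,
   hence lam^n = 1. *)
From Stdlib Require Import Reals List Lra Lia ClassicalEpsilon Classical.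
From Coquelicot Require Import Coquelicot.
Open Scope R_scope.

Definition eqdec {G : Type} (a b : G) : {a = b} + {a <> b} :=
  excluded_middle_informative (a = b).

Lemma extend_list {G : Type} (g0 : G) (F0 : list G) :
  exists L, NoDup (g0 :: L) /\ incl F0 (g0 :: L).
Proof.
  exists (nodup eqdec (remove eqdec g0 F0)). split.
  - constructor.
    + rewrite nodup_In. apply remove_In.
    + apply NoDup_nodup.
  - intros z Hz. destruct (eqdec z g0) as [->|n]; [now left|right].
    rewrite nodup_In. now apply in_in_remove.
Qed.

Definition rsum {G : Type} (mu : G -> R) (l : list G) : R :=
  fold_right Rplus 0 (map mu l).

Lemma fin_sum_R {G : Type} (mu : G -> R) (l : list G) :
  fin_sum (fun g => RtoC (mu g)) l = RtoC (rsum mu l).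
Proof.
  induction l as [|a l IH]; [reflexivity|].
  unfold fin_sum in *; simpl. rewrite IH.
  unfold RtoC, Cplus; simpl. f_equal; ring.
Qed.

Lemma rsum_ge0 {G : Type} (mu : G -> R) (l : list G) :
  (forall g, 0 <= mu g) -> 0 <= rsum mu l.
Proof.
  intros H; induction l as [|a l IH]; unfold rsum in *; simpl; [lra|].
  specialize (H a). lra.
Qed.

Lemma fin_sum_weighted_bound {G : Type} (mu : G -> R) (h : G -> C) (S : R)
  (l : list G) :
  (forall g, 0 <= mu g) -> (forall g, Cmod (h g) <= S) ->
  Cmod (fin_sum (fun g => Cmult (RtoC (mu g)) (h g)) l) <= rsum mu l * S.
Proof.
  intros Hpos Hh; induction l as [|a l IH].
  - unfold fin_sum, rsum; simpl. rewrite Cmod_0. lra.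
  - unfold fin_sum, rsum in *; simpl. eapply Rle_trans; [apply Cmod_triangle|].
    rewrite Cmod_mult, Cmod_R, Rabs_pos_eq by apply Hpos.
    assert (mu a * Cmod (h a) <= mu a * S)
      by (apply Rmult_le_compat_l; [apply Hpos|apply Hh]).
    lra.
Qed.

Lemma usum_single_term {G : Type} (mu : G -> R) (h : G -> C) (s : C) (S : R)
  (g0 : G) :
  prob_measure mu -> (forall g, Cmod (h g) <= S) -> 0 <= S ->
  has_usum (fun g => Cmult (RtoC (mu g)) (h g)) s ->
  Cmod (Cminus s (Cmult (RtoC (mu g0)) (h g0))) <= (1 - mu g0) * S.
Proof.
  intros [Hpos Hmass] Hh HS Hs.
  set (A := Cmult (RtoC (mu g0)) (h g0)).
  assert (approx : forall eps, 0 < eps ->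
            Cmod (Cminus s A) <= (1 - mu g0) * S + eps * (1 + S)).
  { intros eps Heps.
    destruct (Hs eps Heps) as [F1 H1].
    destruct (Hmass eps Heps) as [F2 H2].
    destruct (extend_list g0 (F1 ++ F2)) as [L [HN Hinc]].
    specialize (H1 _ HN (fun z Hz => Hinc z (in_or_app _ _ _ (or_introl Hz)))).
    specialize (H2 _ HN (fun z Hz => Hinc z (in_or_app _ _ _ (or_intror Hz)))).
    assert (rest_mass : rsum mu L <= 1 - mu g0 + eps).
    { rewrite fin_sum_R in H2. unfold rsum in H2; simpl in H2. fold (rsum mu L) in H2.
      replace (Cminus (RtoC (mu g0 + rsum mu L)) (RtoC 1))
        with (RtoC (mu g0 + rsum mu L - 1)) in H2
        by (unfold Cminus, RtoC, Cplus, Copp; simpl; f_equal; ring).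
      rewrite Cmod_R in H2. apply Rabs_def2 in H2. lra. }
    set (B := fin_sum (fun g => Cmult (RtoC (mu g)) (h g)) L).
    assert (HB : Cmod B <= (1 - mu g0 + eps) * S).
    { eapply Rle_trans; [exact (fin_sum_weighted_bound mu h S L Hpos Hh)|].
      apply Rmult_le_compat_r; assumption. }
    change (Cmod (Cminus (Cplus A B) s) < eps) in H1.
    replace (Cminus s A) with (Cplus (Copp (Cminus (Cplus A B) s)) B) by field.
    eapply Rle_trans; [apply Cmod_triangle|]. rewrite Cmod_opp. nra. }
  apply Rle_plus_epsilon. intros eps Heps.
  assert (Hq : 0 < eps / (1 + S)) by (apply Rdiv_lt_0_compat; lra).
  specialize (approx _ Hq).
  replace (eps / (1 + S) * (1 + S)) with eps in approx by (field; lra).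
  exact approx.
Qed.

Definition delta {G : Type} (a : G) (z : G) : C :=
  if eqdec z a then RtoC 1 else RtoC 0.

Lemma Cconj_RtoC (r : R) : Cconj (RtoC r) = RtoC r.
Proof. unfold Cconj, RtoC; simpl; f_equal; ring. Qed.

(* A bounded operator has uniformly bounded matrix coefficients:
   T x y = <T delta_y, delta_x>. *)
Lemma coef_bound {G : Type} (T : G -> G -> C) :
  bounded_op T -> exists M, forall x y, Cmod (T x y) <= M.
Proof.
  intros [M HM]. exists M. intros x y.
  replace M with (M * 1 * 1) by ring.
  destruct (eqdec x y) as [<-|Hxy].
  - specialize (HM (x :: nil) (delta x) (delta x)).
    unfold fin_sum, l2norm_fin, delta in HM; simpl in HM.
    destruct (eqdec x x); [|congruence].
    rewrite Cconj_RtoC, Cmod_1 in HM.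
    rewrite ?Rmult_1_l, ?Rplus_0_r, ?sqrt_1 in HM.
    replace (Cplus (Cplus (Cmult (RtoC 1) (Cmult (T x x) (RtoC 1))) (RtoC 0)) (RtoC 0))
      with (T x x) in HM by field.
    apply HM. repeat constructor. auto.
  - specialize (HM (x :: y :: nil) (delta y) (delta x)).
    unfold fin_sum, l2norm_fin, delta in HM; simpl in HM.
    destruct (eqdec x x); [|congruence].
    destruct (eqdec y y); [|congruence].
    destruct (eqdec x y); [congruence|].
    destruct (eqdec y x); [congruence|].
    rewrite !Cconj_RtoC, Cmod_1, Cmod_0 in HM.
    rewrite ?Rmult_1_l, ?Rmult_0_l, ?Rplus_0_r, ?Rplus_0_l, ?sqrt_1 in HM.
    match type of HM with _ -> Cmod ?z <= _ => replace z with (T x y) in HM by field end.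
    apply HM. repeat constructor; simpl; intuition.
Qed.

Lemma coef_sup {G : Type} (T : G -> G -> C) :
  bounded_op T -> (exists x y, T x y <> RtoC 0) ->
  exists S, 0 < S /\ (forall x y, Cmod (T x y) <= S) /\
    (forall B, (forall x y, Cmod (T x y) <= B) -> S <= B).
Proof.
  intros HT [x0 [y0 H0]].
  destruct (coef_bound T HT) as [M HM].
  set (E := fun r => exists x y, r = Cmod (T x y)).
  destruct (completeness E) as [S [Hub Hlub]].
  - exists M. intros r [x [y ->]]. apply HM.
  - exists (Cmod (T x0 y0)), x0, y0. reflexivity.
  - assert (HS : forall x y, Cmod (T x y) <= S)
      by (intros x y; apply Hub; exists x, y; reflexivity).
    exists S. repeat split.
    + apply Rlt_le_trans with (Cmod (T x0 y0)); [apply Cmod_gt_0; exact H0|apply HS].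
    + exact HS.
    + intros B HB. apply Hlub. intros r [x [y ->]]. apply HB.
Qed.

Lemma lub_contraction {G : Type} (T : G -> G -> C) (S d c : R) :
  0 < S -> 0 < d ->
  (forall B, (forall x y, Cmod (T x y) <= B) -> S <= B) ->
  (forall x y, d * Cmod (T x y) <= c * S) -> d <= c.
Proof.
  intros HS Hd Hlub Hcoef.
  assert (HSle : S <= c * S / d).
  { apply Hlub. intros x y. apply Rmult_le_reg_l with d; [lra|].
    replace (d * (c * S / d)) with (c * S) by (field; lra). apply Hcoef. }
  apply Rmult_le_compat_r with (r := d) in HSle; [|lra].
  replace (c * S / d * d) with (c * S) in HSle by (field; lra).
  nra.
Qed.

Lemma Cmod_pow (z : C) (n : nat) : Cmod (pow_n z n) = Cmod z ^ n.
Proof.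
  induction n as [|n IH]; simpl; [apply Cmod_1|].
  change (mult z (pow_n z n)) with (Cmult z (pow_n z n)).
  rewrite Cmod_mult, IH. reflexivity.
Qed.

Lemma unit_circle_far (z : C) (a : R) :
  Cmod z = 1 -> z <> RtoC 1 -> 0 < a ->
  0 < Cmod (Cminus z (RtoC a)) /\ 1 - a < Cmod (Cminus z (RtoC a)).
Proof.
  destruct z as [u v]. intros Hz Hz1 Ha.
  unfold Cmod, Cminus, Cplus, Copp, RtoC in *; cbn [fst snd] in *.
  assert (Hq : u ^ 2 + v ^ 2 = 1).
  { rewrite <- (sqrt_sqrt (u ^ 2 + v ^ 2)) by nra. rewrite Hz. ring. }
  assert (Hu : u < 1).
  { destruct (Req_dec u 1) as [->|Hu1]; [|nra].
    exfalso. apply Hz1. assert (v = 0) by nra. subst. reflexivity. }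
  destruct (Rle_lt_dec a 1) as [Ha1|Ha1].
  - assert (1 - a < sqrt ((u + - a) ^ 2 + (v + - 0) ^ 2)); [|lra].
    rewrite <- (sqrt_pow2 (1 - a)) by lra.
    apply sqrt_lt_1_alt. split; nra.
  - assert (0 < sqrt ((u + - a) ^ 2 + (v + - 0) ^ 2)); [|lra].
    apply sqrt_lt_R0. nra.
Qed.

Section Words.

Variable G : Type.
Variable mul : G -> G -> G.
Variable e : G.
Hypothesis mul_assoc : forall a b c, mul a (mul b c) = mul (mul a b) c.
Hypothesis mul_1l : forall a, mul e a = a.
Hypothesis mul_1r : forall a, mul a e = a.

Definition wprod (w : list G) : G := fold_right mul e w.

Definition wmass (mu : G -> R) (w : list G) : R := fold_right Rmult 1 (map mu w).

Lemma wprod_app (w1 w2 : list G) :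
  wprod (w1 ++ w2) = mul (wprod w1) (wprod w2).
Proof.
  induction w1 as [|a w1 IH]; simpl; [now rewrite mul_1l|].
  unfold wprod in *. rewrite IH. apply mul_assoc.
Qed.

Lemma semigroup_word (mu : G -> R) (g : G) :
  gen_semigroup mul mu g ->
  exists w, w <> nil /\ List.Forall (fun h => 0 < mu h) w /\ wprod w = g.
Proof.
  induction 1 as [g Hg|a b _ IHa _ IHb].
  - exists (g :: nil). repeat split; [discriminate|auto|apply mul_1r].
  - destruct IHa as [w1 [n1 [f1 p1]]], IHb as [w2 [n2 [f2 p2]]].
    exists (w1 ++ w2). repeat split.
    + destruct w1; [contradiction|discriminate].
    + apply List.Forall_app; auto.
    + rewrite wprod_app, p1, p2. reflexivity.
Qed.

Lemma wmass_pos (mu : G -> R) (w : list G) :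
  List.Forall (fun h => 0 < mu h) w -> 0 < wmass mu w.
Proof. induction 1; unfold wmass in *; simpl; nra. Qed.

Lemma word_estimate (mu : G -> R) (T : G -> G -> C) (lam : C) (S : R) :
  prob_measure mu -> Cmod lam = 1 -> 0 <= S ->
  (forall x y, Cmod (T x y) <= S) -> markov_eig mul mu T lam ->
  forall w x y,
  Cmod (Cminus (Cmult (pow_n lam (length w)) (T x y))
               (Cmult (RtoC (wmass mu w)) (T (mul x (wprod w)) (mul y (wprod w)))))
    <= (1 - wmass mu w) * S.
Proof.
  intros Hmu Hlam HS0 HS Heig w.
  induction w as [|g w IH]; intros x y.
  - unfold wmass, wprod; simpl. rewrite !mul_1r.
    change (pow_n lam 0) with (RtoC 1).
    match goal with |- Cmod ?z <= _ => replace z with (RtoC 0) end.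
    + rewrite Cmod_0. lra.
    + change (@one C_Ring) with (RtoC 1). field.
  - assert (Hg : 0 <= mu g) by apply (proj1 Hmu).
    (* one step along g, then the rest of the word from (x g, y g) *)
    assert (Hstep := usum_single_term mu (fun g => T (mul x g) (mul y g)) _ S g
                       Hmu (fun _ => HS _ _) HS0 (Heig x y)).
    specialize (IH (mul x g) (mul y g)). cbv beta in Hstep.
    unfold wmass, wprod in *; simpl. rewrite !mul_assoc.
    fold (wmass mu w) in *.
    set (P := pow_n lam (length w)) in *.
    set (B := T (mul x g) (mul y g)) in *.
    set (D := T (mul (mul x g) (fold_right mul e w)) (mul (mul y g) (fold_right mul e w))) in *.
    match goal with |- Cmod ?z <= _ =>
      replace z with
        (Cplus (Cmult P (Cminus (Cmult lam (T x y)) (Cmult (RtoC (mu g)) B)))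
               (Cmult (RtoC (mu g)) (Cminus (Cmult P B) (Cmult (RtoC (wmass mu w)) D))))
    end.
    2:{ change (mult lam P) with (Cmult lam P). rewrite RtoC_mult. field. }
    eapply Rle_trans; [apply Cmod_triangle|]. rewrite !Cmod_mult.
    unfold P; rewrite Cmod_pow, Hlam, pow1, Cmod_R, Rabs_pos_eq by lra.
    assert (mu g * Cmod (Cminus (Cmult (pow_n lam (length w)) B)
                                (Cmult (RtoC (wmass mu w)) D))
            <= mu g * ((1 - wmass mu w) * S)) by (apply Rmult_le_compat_l; auto).
    nra.
Qed.

End Words.

Theorem corollary2p4 (G : Type) (mul : G -> G -> G) (inv : G -> G) (e : G)
  (Hgrp : is_group mul inv e) (Hcount : countable_type G)
  (mu : G -> R) (Hmu : prob_measure mu)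
  (Hgen : forall g : G, gen_semigroup mul mu g)
  (lam : C) (Hlam : Cmod lam = 1)
  (T : G -> G -> C) (HT : bounded_op T) (HT0 : exists x y, T x y <> RtoC 0)
  (Heig : markov_eig mul mu T lam) :
  exists k : nat, (0 < k)%nat /\ pow_n lam k = RtoC 1.
Proof.
  destruct Hgrp as [Hassoc [Hunit _]].
  assert (H1l : forall a, mul e a = a) by (intro a; apply Hunit).
  assert (H1r : forall a, mul a e = a) by (intro a; apply Hunit).
  destruct (coef_sup T HT HT0) as [S [HSpos [HS HSlub]]].
  destruct (semigroup_word G mul e Hassoc H1l H1r mu e (Hgen e)) as [w [wn [wpos wp]]].
  exists (length w). split; [destruct w; [contradiction|simpl; lia]|].
  apply NNPP. intro Hne.
  set (a := wmass G mu w). set (z := pow_n lam (length w)).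
  assert (Ha : 0 < a) by apply wmass_pos, wpos.
  assert (Hz : Cmod z = 1) by (unfold z; rewrite Cmod_pow, Hlam; apply pow1).
  destruct (unit_circle_far z a Hz Hne Ha) as [Hdpos Hfar].
  set (d := Cmod (Cminus z (RtoC a))) in *.
  (* along w every coefficient returns to itself: d |T x y| <= (1 - a) S *)
  assert (Hret : forall x y, d * Cmod (T x y) <= (1 - a) * S).
  { intros x y.
    assert (Hw := word_estimate G mul e Hassoc H1r mu T lam S Hmu Hlam
                   (Rlt_le _ _ HSpos) HS Heig w x y).
    rewrite wp, !H1r in Hw. fold a z in Hw.
    replace (Cminus (Cmult z (T x y)) (Cmult (RtoC a) (T x y)))
      with (Cmult (Cminus z (RtoC a)) (T x y)) in Hw by field.
    rewrite Cmod_mult in Hw. exact Hw. }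
  assert (Hle := lub_contraction T S d (1 - a) HSpos Hdpos HSlub Hret). lra.
Qed.
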